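(* Let $n\ge2$, $c\in(0,\infty)$, and let $\Sigma_n\in\mathbb{R}^{n\times n}$ have entries $(\Sigma_n)_{ij}=\frac{\pi}{i+j}+\frac{4c\pi^2}{(i+1)(j+1)}$ if $c\in(0,1]$ and $(\Sigma_n)_{ij}=\frac{\pi}{c(i+j)}+\frac{4\pi^2}{(i+1)(j+1)}$ if $c\in(1,\infty)$. Then $\Sigma_n=GG^t$ with $G=(g_{ij})$ lower triangular ($g_{ij}=0$ for $j>i$) where, for $c\in(0,1]$, $$g_{i1}=\frac{2}{i+1}\sqrt{\frac{\pi(1+2c\pi)}{2}}\ (i\ge1),\qquad g_{ij}=\frac{\prod_{k=1}^{j-1}(i-k)\prod_{k=1}^{j}(j+k)}{\prod_{k=1}^{j-1}(j-k)\prod_{k=1}^{j}(i+k)}\sqrt{\frac{\pi\prod_{k=1}^{j-1}(j-k)^2}{2j\prod_{k=1}^{j-1}(j+k)^2}}\ (1<j\le i),$$ and for $c\in(1,\infty)$ the same formulas hold with the radicands replaced by $\frac{\pi(1+2c\pi)}{2c}$ and $\frac{\pi\prod_{k=1}^{j-1}(j-k)^2}{2cj\prod_{k=1}^{j-1}(j+k)^2}$, respectively.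
   Context: $\Sigma_n$ is the asymptotic covariance matrix, in the critical regime $t\delta_t^d\to c$, of the vector $(\tilde L_t^{(0)},\dots,\tilde L_t^{(n-1)})$ of normalized length power functionals in dimension $d=2$ for a window of volume $1$. *)

From mathcomp Require Import all_boot all_order all_algebra.
From mathcomp Require Import all_classical all_reals all_analysis.
Set Implicit Arguments. Unset Strict Implicit. Unset Printing Implicit Defensive.
Import Order.TTheory GRing.Theory Num.Theory.
Local Open Scope ring_scope.

(* Indices: the matrix entry (i, j) with i j : 'I_n corresponds to the
   paper's 1-based entry (i+1, j+1). *)

Definition Sigma {R : realType} (n : nat) (c : R) : 'M[R]_n :=
  \matrix_(i < n, j < n)
    let a := (i.+1)%:R : R in let b := (j.+1)%:R : R in
    if c <= 1 then pi / (a + b) + 4 * c * pi ^+ 2 / ((a + 1) * (b + 1))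
    else pi / (c * (a + b)) + 4 * pi ^+ 2 / ((a + 1) * (b + 1)).

Definition Gentry {R : realType} (c : R) (i j : nat) : R :=
  (* i, j are the paper's 1-based indices *)
  if (i < j)%N then 0
  else if j == 1%N then
    2 / (i.+1)%:R *
      Num.sqrt (if c <= 1 then pi * (1 + 2 * c * pi) / 2
                else pi * (1 + 2 * c * pi) / (2 * c))
  else
    (\prod_(1 <= k < j) ((i - k)%:R : R) * \prod_(1 <= k < j.+1) ((j + k)%:R : R))
    / (\prod_(1 <= k < j) ((j - k)%:R : R) * \prod_(1 <= k < j.+1) ((i + k)%:R : R))
    * Num.sqrt
        (if c <= 1 then
           pi * \prod_(1 <= k < j) ((j - k)%:R ^+ 2 : R)
           / (2 * j%:R * \prod_(1 <= k < j) ((j + k)%:R ^+ 2 : R))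
         else
           pi * \prod_(1 <= k < j) ((j - k)%:R ^+ 2 : R)
           / (2 * c * j%:R * \prod_(1 <= k < j) ((j + k)%:R ^+ 2 : R))).

Definition Gmat {R : realType} (n : nat) (c : R) : 'M[R]_n :=
  \matrix_(i < n, j < n) Gentry c i.+1 j.+1.

(* With P_k(x) = prod_{1<=m<k} (x-m) / prod_{1<=m<=k} (x+m), the kernel 1/(x+y)
   telescopes as 1/(x+y) = sum_{1<=k<=N} 2k P_k(x) P_k(y) + R_N(x,y), where the
   remainder R_N carries the factor prod_{1<=m<=N} (x-m) and so vanishes at
   x = 1, ..., N.  On the grid {1..n}^2 the matrix 1/(i+j) is therefore
   sum_k 2k P_k P_k^t.  With s = 1 for c <= 1 and s = c otherwise,
   g_{ik} = sqrt(2k pi/s) P_k(i) for k >= 2, and the first column also absorbs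
   the rank-one term 4 c pi^2 / (s (i+1)(j+1)). *)
From mathcomp Require Import all_boot all_order all_algebra.
From mathcomp Require Import all_classical all_reals all_analysis.
From mathcomp Require Import ring lra.
Set Implicit Arguments. Unset Strict Implicit. Unset Printing Implicit Defensive.
Import Order.TTheory GRing.Theory Num.Theory.
Local Open Scope ring_scope.

Section HilbertKernel.

Variable F : fieldType.

Definition hilbert_term (k : nat) (x : F) : F :=
  (\prod_(1 <= m < k) (x - m%:R)) / (\prod_(1 <= m < k.+1) (x + m%:R)).

Definition hilbert_rem (N : nat) (x y : F) : F :=
  (\prod_(1 <= m < N.+1) (x - m%:R) * \prod_(1 <= m < N.+1) (y - m%:R)) /
  ((x + y) * \prod_(1 <= m < N.+1) (x + m%:R) * \prod_(1 <= m < N.+1) (y + m%:R)).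

Lemma hilbert_term_nat_eq0 (k i : nat) : (0 < i < k)%N -> hilbert_term k i%:R = 0.
Proof.
case/andP=> i_gt0 ik.
rewrite /hilbert_term (@big_cat_nat _ _ _ i 1 k) ?(ltnW ik) //.
by rewrite (big_ltn _ (n := k)) // subrr /= mul0r mulr0 mul0r.
Qed.

Lemma hilbert_rem_nat_eq0 (N i : nat) (y : F) :
  (0 < i <= N)%N -> hilbert_rem N i%:R y = 0.
Proof.
case/andP=> i_gt0 iN.
rewrite /hilbert_rem (@big_cat_nat _ _ _ i 1 N.+1) ?leqW //.
by rewrite (big_ltn _ (n := N.+1)) ?ltnS // subrr /= mul0r mulr0 !mul0r.
Qed.

End HilbertKernel.

Section HilbertKernelExpansion.

Variable R : realFieldType.

Lemma prod_addn_neq0 (x : R) (N : nat) :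
  0 < x -> \prod_(1 <= m < N) (x + m%:R) != 0.
Proof.
move=> x_gt0; rewrite prodf_seq_neq0; apply/allP => m _ /=.
by rewrite gt_eqF // ltr_wpDr.
Qed.

Lemma hilbert_rem_step (N : nat) (x y : R) : 0 < x -> 0 < y ->
  hilbert_rem N x y =
  hilbert_rem N.+1 x y + 2 * N.+1%:R * hilbert_term N.+1 x * hilbert_term N.+1 y.
Proof.
move=> x_gt0 y_gt0.
have px := prod_addn_neq0 N.+1 x_gt0; have py := prod_addn_neq0 N.+1 y_gt0.
rewrite /hilbert_rem /hilbert_term !(big_nat_recr N.+1) //=.
move: px py.
set px := \prod_(1 <= m < N.+1) (x + m%:R); set py := \prod_(1 <= m < N.+1) (y + m%:R).
move=> px_neq0 py_neq0.
have := ler0n R N => N_ge0.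
have xy_neq0 : x + y != 0 by rewrite gt_eqF // addr_gt0.
have xN_neq0 : x + (1 + N%:R) != 0 by rewrite gt_eqF //; lra.
have yN_neq0 : y + (1 + N%:R) != 0 by rewrite gt_eqF //; lra.
by field; rewrite px_neq0 py_neq0 xy_neq0 xN_neq0 yN_neq0.
Qed.

Lemma hilbert_kernel_telescope (N : nat) (x y : R) : 0 < x -> 0 < y ->
  \sum_(k < N) 2 * k.+1%:R * hilbert_term k.+1 x * hilbert_term k.+1 y =
  (x + y)^-1 - hilbert_rem N x y.
Proof.
move=> x_gt0 y_gt0; elim: N => [|N IHN].
  by rewrite big_ord0 /hilbert_rem !big_geq // !mulr1 mul1r subrr.
by rewrite big_ord_recr /= IHN hilbert_rem_step // opprD addrA subrK.
Qed.

Lemma hilbert_kernel_expansion (N i : nat) (y : R) : (0 < i <= N)%N -> 0 < y ->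
  (i%:R + y)^-1 =
  \sum_(k < N) 2 * k.+1%:R * hilbert_term k.+1 i%:R * hilbert_term k.+1 y.
Proof.
move=> iN y_gt0; have i_gt0 : 0 < i%:R :> R by rewrite ltr0n; case/andP: iN.
by rewrite hilbert_kernel_telescope // hilbert_rem_nat_eq0 // subr0.
Qed.

End HilbertKernelExpansion.

Section CovarianceFactor.

Variables (R : realType) (c : R).
Hypothesis c_gt0 : 0 < c.

Definition cov_scale : R := if c <= 1 then 1 else c.

Lemma SigmaE (n : nat) (i j : 'I_n) :
  Sigma n c i j = pi / cov_scale * (i.+1%:R + j.+1%:R)^-1 +
                  4 * c * pi ^+ 2 / (cov_scale * i.+2%:R * j.+2%:R).
Proof.
have := ler0n R i; have := ler0n R j => i_ge0 j_ge0.
have ij_neq0 : i%:R + 1 + (j%:R + 1) != 0 :> R by rewrite gt_eqF //; lra.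
have i_neq0 : i%:R + 1 + 1 != 0 :> R by rewrite gt_eqF //; lra.
have j_neq0 : j%:R + 1 + 1 != 0 :> R by rewrite gt_eqF //; lra.
have c_neq0 : c != 0 by rewrite gt_eqF.
rewrite mxE /cov_scale -!natr1.
by case: ifP => _; field; rewrite ij_neq0 i_neq0 j_neq0 ?c_neq0.
Qed.

Definition col_radicand (K : nat) : R :=
  if c <= 1 then
    pi * \prod_(1 <= k < K) ((K - k)%:R ^+ 2 : R)
     / (2 * K%:R * \prod_(1 <= k < K) ((K + k)%:R ^+ 2 : R))
  else
    pi * \prod_(1 <= k < K) ((K - k)%:R ^+ 2 : R)
     / (2 * c * K%:R * \prod_(1 <= k < K) ((K + k)%:R ^+ 2 : R)).

Definition col_norm (K : nat) : R :=
  \prod_(1 <= m < K.+1) ((K + m)%:R : R) / \prod_(1 <= m < K) ((K - m)%:R : R).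

Lemma col_radicand_ge0 (K : nat) : 0 <= col_radicand K.
Proof.
have sqr_prod_ge0 (f : nat -> R) : 0 <= \prod_(1 <= k < K) f k ^+ 2.
  by apply: prodr_ge0 => k _; exact: sqr_ge0.
rewrite /col_radicand; case: ifP => _;
  by rewrite divr_ge0 ?mulr_ge0 ?sqr_prod_ge0 ?ler0n ?(ltW (pi_gt0 R)) ?(ltW c_gt0).
Qed.

Lemma col_norm_sqr_radicand (K : nat) : (0 < K)%N ->
  col_norm K ^+ 2 * col_radicand K = pi / cov_scale * (2 * K%:R).
Proof.
move=> K_gt0.
rewrite /col_norm /col_radicand /cov_scale big_nat_recr //= !prodrXl natrD.
have pD : \prod_(1 <= m < K) ((K + m)%:R : R) != 0.
  rewrite prodf_seq_neq0; apply/allP => m; rewrite mem_index_iota => /andP[m_gt0 _].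
  by rewrite pnatr_eq0 -lt0n addn_gt0 m_gt0 orbT.
have pB : \prod_(1 <= m < K) ((K - m)%:R : R) != 0.
  rewrite prodf_seq_neq0; apply/allP => m; rewrite mem_index_iota => /andP[_ mK].
  by rewrite pnatr_eq0 subn_eq0 -ltnNge.
have K_neq0 : K%:R != 0 :> R by rewrite pnatr_eq0 -lt0n.
have c_neq0 : c != 0 by rewrite gt_eqF.
move: pD pB.
set pD := \prod_(1 <= m < K) ((K + m)%:R : R).
set pB := \prod_(1 <= m < K) ((K - m)%:R : R) => pD_neq0 pB_neq0.
by case: ifP => _; field; rewrite pD_neq0 pB_neq0 K_neq0 ?c_neq0.
Qed.

Lemma Gentry_colE (I K : nat) : (2 <= K <= I)%N ->
  Gentry c I K = col_norm K * hilbert_term K I%:R * Num.sqrt (col_radicand K).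
Proof.
case/andP=> K_ge2 KI.
rewrite /Gentry ltnNge KI /= gtn_eqF // /col_norm /hilbert_term /col_radicand.
rewrite (@eq_big_nat _ _ _ 1 K (fun k => (I - k)%:R) (fun k => I%:R - k%:R)); last first.
  by move=> k /andP[_ kK]; rewrite natrB // (leq_trans (ltnW kK)).
rewrite (@eq_big_nat _ _ _ 1 K.+1 (fun k => (I + k)%:R) (fun k => I%:R + k%:R)); last first.
  by move=> k _; rewrite natrD.
by rewrite !invfM -!mulrA mulrCA; congr (_ * _); rewrite mulrCA.
Qed.

Lemma Gentry_col1_mul (I J : nat) : (0 < I)%N -> (0 < J)%N ->
  Gentry c I 1 * Gentry c J 1 =
  pi / cov_scale * (2 * hilbert_term 1 I%:R * hilbert_term 1 J%:R) +
  4 * c * pi ^+ 2 / (cov_scale * I.+1%:R * J.+1%:R).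
Proof.
move=> I_gt0 J_gt0.
have num_ge0 : 0 <= pi * (1 + 2 * c * pi).
  by rewrite mulr_ge0 ?pi_ge0 // addr_ge0 ?ler01 // !mulr_ge0 ?ler0n ?pi_ge0 ?(ltW c_gt0).
rewrite /Gentry (leq_gtF I_gt0) (leq_gtF J_gt0) /= mulrACA -expr2 sqr_sqrtr; last first.
  by case: ifP => _; rewrite divr_ge0 ?num_ge0 ?mulr_ge0 ?ler0n ?(ltW c_gt0).
rewrite /hilbert_term !big_nat1 !big_geq // -!natr1 /cov_scale.
have := ler0n R I; have := ler0n R J => I_ge0 J_ge0.
have I_neq0 : I%:R + 1 != 0 :> R by rewrite gt_eqF //; lra.
have J_neq0 : J%:R + 1 != 0 :> R by rewrite gt_eqF //; lra.
have c_neq0 : c != 0 by rewrite gt_eqF.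
by case: ifP => _; field; rewrite I_neq0 J_neq0 ?c_neq0.
Qed.

Lemma Gentry_col_mul (I J K : nat) : (0 < I)%N -> (0 < J)%N -> (2 <= K)%N ->
  Gentry c I K * Gentry c J K =
  pi / cov_scale * (2 * K%:R * hilbert_term K I%:R * hilbert_term K J%:R).
Proof.
move=> I_gt0 J_gt0 K_ge2.
have [IK|KI] := ltnP I K.
  by rewrite [Gentry c I K]/Gentry IK (@hilbert_term_nat_eq0 _ K I) ?I_gt0 // !(mul0r, mulr0).
have [JK|KJ] := ltnP J K.
  by rewrite [Gentry c J K]/Gentry JK (@hilbert_term_nat_eq0 _ K J) ?J_gt0 // !(mul0r, mulr0).
rewrite !Gentry_colE ?K_ge2 //.
have sqrt_sqr : Num.sqrt (col_radicand K) ^+ 2 = col_radicand K.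
  by rewrite sqr_sqrtr // col_radicand_ge0.
transitivity (col_norm K ^+ 2 * Num.sqrt (col_radicand K) ^+ 2 *
              hilbert_term K I%:R * hilbert_term K J%:R); first by ring.
by rewrite sqrt_sqr col_norm_sqr_radicand 1?ltnW //; ring.
Qed.

Lemma Gmat_mul_trE (n : nat) (i j : 'I_n) :
  (Gmat n c *m (Gmat n c)^T) i j =
  pi / cov_scale * (i.+1%:R + j.+1%:R)^-1 +
  4 * c * pi ^+ 2 / (cov_scale * i.+2%:R * j.+2%:R).
Proof.
case: n i j => [[]//|n] i j.
rewrite mxE (hilbert_kernel_expansion (N := n.+1)) ?ltn_ord // mulr_sumr.
rewrite !big_ord_recl /= !mxE Gentry_col1_mul // mulr1 addrAC.
by under eq_bigr => k _ do rewrite !mxE Gentry_col_mul //.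
Qed.

End CovarianceFactor.

Theorem corollary7p13 (R : realType) (n : nat) (c : R) :
  (2 <= n)%N -> 0 < c ->
  (forall i j : 'I_n, (i < j)%N -> Gmat n c i j = 0) /\
  Sigma n c = Gmat n c *m (Gmat n c)^T.
Proof.
move=> _ c_gt0; split.
  by move=> i j ij; rewrite mxE /Gentry ltnS ij.
by apply/matrixP => i j; rewrite SigmaE // Gmat_mul_trE.
Qed.
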